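(* Let $p$ be an odd prime with $3 \mid (p-1)$. Then there exists an MDS $(3p,\,12)_{p}$ symbol-pair code, i.e., a code $\mathcal{C}\subseteq \mathbb{F}_p^{3p}$ with minimum symbol-pair distance $d_p(\mathcal{C})=12$ and $|\mathcal{C}| = p^{3p-12+2}$.
   Context: For a vector $\mathbf{x}=(x_0,\dots,x_{n-1})\in\mathbb{F}_q^n$ (indices taken modulo $n$), the symbol-pair distance between $\mathbf{x},\mathbf{y}\in\mathbb{F}_q^n$ is $d_p(\mathbf{x},\mathbf{y})=|\{i\in\mathbb{Z}_n : (x_i,x_{i+1})\neq(y_i,y_{i+1})\}|$. The minimum symbol-pair distance of a code $\mathcal{C}\subseteq\mathbb{F}_q^n$ is $d_p(\mathcal{C})=\min\{d_p(\mathbf{x},\mathbf{y}) : \mathbf{x},\mathbf{y}\in\mathcal{C},\ \mathbf{x}\neq\mathbf{y}\}$. Any code of length $n$ over $\mathbb{F}_q$ with minimum symbol-pair distance $d_p$ (where $2\le d_p\le n$) satisfies the Singleton-type bound $|\mathcal{C}|\le q^{n-d_p+2}$; a code attaining equality is called an MDS symbol-pair code. An $(n,d_p)_q$ symbol-pair code is a code of length $n$ over $\mathbb{F}_q$ with minimum symbol-pair distance $d_p$. *)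

From mathcomp Require Import all_boot all_algebra.
Set Implicit Arguments. Unset Strict Implicit. Unset Printing Implicit Defensive.

Definition word (F : finType) (n : nat) := {ffun 'I_n -> F}.

Definition pair_dist (F : finType) (n : nat) (x y : word F n) : nat :=
  #|[set i : 'I_n | (x i != y i) || (x (ordS i) != y (ordS i))]|.

Definition min_pair_dist (F : finType) (n : nat) (C : {set word F n}) (d : nat) : Prop :=
  (exists x y, [/\ x \in C, y \in C, x != y & pair_dist x y = d]) /\
  (forall x y, x \in C -> y \in C -> x != y -> d <= pair_dist x y).

(* Let w be a primitive cube root of unity in F_p and n = 3p.  The code consists of the
   words c whose moments sum_i c_i w^(k i) i^j vanish for j < 5, 3, 2 when k = 0, 1, 2;
   a codeword vanishing outside the first ten positions is zero, so it has p^(n-10) words.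
   Grouping positions by their residue t mod 3, on which i |-> i mod p is injective, the
   conditions say: in each class the moments of order 0 and 1 vanish, the moment of
   order 2 is w^t lambda, and the moments of order 3 and 4 sum to zero over the classes.
   A Vandermonde argument then gives every nonzero class at least 3 nonzero entries, and
   at least 4 when lambda = 0.  The pair weight of c is its weight plus its number of runs.
   If a class vanishes, lambda = 0 and the classes are large while runs are short, so the
   pair weight is at least 12.  Otherwise the weight is at least 9 and a smaller pair
   weight leaves, after a cyclic shift, a single run of length at most 10 or two runs of
   total length 9 starting at position 0; in each of these finitely many configurations
   the relations of order 3 and 4 force lambda = 0, which contradicts the class sizes. *)

From mathcomp Require Import all_boot all_algebra fingroup pgroup.
From mathcomp Require Import ring zify.
Set Implicit Arguments. Unset Strict Implicit. Unset Printing Implicit Defensive.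
Import GRing.Theory.

(** * Runs of a subset of Z/nZ *)

Section CyclicRuns.
Variable n : nat.
Hypothesis n_gt0 : 0 < n.

Definition cyc (x : nat) : 'I_n := Ordinal (ltn_pmod x n_gt0).

Lemma cyc_val (i : 'I_n) : cyc i = i.
Proof. by apply: val_inj; rewrite /= modn_small. Qed.

Lemma cycDr x y : cyc (x + cyc y) = cyc (x + y).
Proof. by apply: val_inj; rewrite /= modnDmr. Qed.

Lemma cycDn x : cyc (x + n) = cyc x.
Proof. by apply: val_inj; rewrite /= modnDr. Qed.

Lemma ordS_cyc x : ordS (cyc x) = cyc x.+1.
Proof. by apply: val_inj; rewrite /= -addn1 modnDml addn1. Qed.

Lemma cyc_eq x k1 k2 : k1 < n -> k2 < n -> (cyc (x + k1) == cyc (x + k2)) = (k1 == k2).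
Proof.
move=> lt1 lt2; apply/eqP/eqP => [/(congr1 val) /= /eqP|-> //].
by rewrite eqn_modDl !modn_small // => /eqP.
Qed.

Variable S : {set 'I_n}.

Definition run_starts := [set i | (i \notin S) && (ordS i \in S)].

Lemma card_pair_cover :
  #|[set i | (i \in S) || (ordS i \in S)]| = #|S| + #|run_starts|.
Proof.
rewrite -cardsUI (_ : S :&: run_starts = set0) ?cards0 ?addn0; last first.
  by apply/setP => i; rewrite !inE; case: (i \in S).
by apply: eq_card => i; rewrite !inE; case: (i \in S).
Qed.

Lemma card_le_run_starts :
  (forall i, i \in S -> ord_pred i \notin S) -> #|S| <= #|run_starts|.
Proof.
move=> isolated; rewrite -(card_imset S (@ord_pred_inj n)).
apply/subset_leq_card/subsetP => _ /imsetP [i Si ->].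
by rewrite inE isolated // ord_predK Si.
Qed.

Lemma card_le_double_run_starts :
  (forall i, i \in S -> ord_pred i \in S -> ord_pred (ord_pred i) \notin S) ->
  #|S| <= 2 * #|run_starts|.
Proof.
move=> no_triple; pose D := [set i in S | ord_pred i \notin S].
rewrite -(cardsID D S) mul2n -addnn; apply: leq_add.
  rewrite -(card_imset (S :&: D) (@ord_pred_inj n)).
  apply/subset_leq_card/subsetP => y /imsetP [i]; rewrite !inE => /and3P [Si _ Spi] ->.
  by rewrite ord_predK Spi Si.
rewrite -(card_imset (S :\: D) (inj_comp (@ord_pred_inj n) (@ord_pred_inj n))).
apply/subset_leq_card/subsetP => y /imsetP [i]; rewrite !inE => /andP [+ Si] ->.
by rewrite Si /= negbK => Spi; rewrite no_triple // ord_predK Spi.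
Qed.

Definition run_len (x : 'I_n) := find (fun k => cyc (x + k.+1) \notin S) (iota 0 n).

Lemma run_len_le x : run_len x <= n.
Proof. by rewrite -[n in _ <= n](size_iota 0) find_size. Qed.

Lemma mem_run_len x k l : l <= k -> k < run_len x -> cyc (x + l.+1) \in S.
Proof.
move=> lk kx; have lx := leq_ltn_trans lk kx.
have := before_find 0 lx; rewrite nth_iota ?add0n ?(leq_trans lx (run_len_le x)) //.
by move/negbFE.
Qed.

Lemma run_len_gt x k :
  x \notin S -> (forall l, l <= k -> cyc (x + l.+1) \in S) -> k < run_len x.
Proof.
move=> Sx inS; rewrite ltnNge; apply/negP => xk.
have [xn|nx] := ltnP (run_len x) n.
  have /(nth_find 0) : has (fun k => cyc (x + k.+1) \notin S) (iota 0 n).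
    by rewrite has_find size_iota.
  by rewrite -/(run_len x) nth_iota // add0n inS.
have kn : n.-1 <= k by lia.
by have := inS _ kn; rewrite prednK // cycDn cyc_val (negbTE Sx).
Qed.

Definition run x := [set cyc (x + k.+1) | k : 'I_(run_len x)].

Lemma card_run x : #|run x| = run_len x.
Proof.
rewrite card_imset ?card_ord // => k1 k2 /eqP.
by rewrite !addnS -!addSn cyc_eq ?(leq_trans (ltn_ord _) (run_len_le x)) // => /eqP /val_inj.
Qed.

Lemma run_sub x : run x \subset S.
Proof. by apply/subsetP => _ /imsetP [k _ ->]; exact: mem_run_len (ltn_ord k). Qed.

Lemma run_len_gt0 x : x \in run_starts -> 0 < run_len x.
Proof.
rewrite inE => /andP [Sx Ssx]; apply: run_len_gt Sx _ => l.
by rewrite leqn0 => /eqP ->; rewrite addn1 -ordS_cyc cyc_val.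
Qed.

Lemma mem_run_cover q i : q \notin S -> i \in S -> exists2 x, x \in run_starts & i \in run x.
Proof.
move=> Sq Si.
suff cover m : cyc (q + m) \in S -> exists2 x, x \in run_starts &
    exists2 k, k < run_len x & cyc (q + m) = cyc (x + k.+1).
  have qi : cyc (q + (i + n - q)) = i.
    by rewrite addnBA ?addKn ?cycDn ?cyc_val // (leq_trans (ltnW (ltn_ord q))) ?leq_addl.
  have := cover (i + n - q); rewrite qi => /(_ Si) [x sx [k kx ik]].
  exists x => //; rewrite ik.
  by apply/imsetP; exists (Ordinal kx).
elim: m => [|m IH]; first by rewrite addn0 cyc_val (negbTE Sq).
rewrite addnS -ordS_cyc; have [Sm Ssm|Sm Ssm] := boolP (cyc (q + m) \in S).
  have [x sx [k kx qm]] := IH Sm; exists x => //; exists k.+1; last first.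
    by rewrite qm ordS_cyc -addnS.
  have xS : x \notin S by move: sx; rewrite inE => /andP [].
  apply: run_len_gt xS _ => l; rewrite leq_eqVlt => /orP [/eqP ->|lk].
    by rewrite addnS -ordS_cyc -qm.
  by apply: (mem_run_len _ kx); rewrite -ltnS.
exists (cyc (q + m)); first by rewrite inE Sm Ssm.
exists 0; last by rewrite addn1 -ordS_cyc cyc_val.
by apply: run_len_gt0; rewrite inE Sm Ssm.
Qed.

Let run_overlap x y k l :
  x \notin S -> x != y -> k <= l -> l < run_len y -> cyc (x + k.+1) != cyc (y + l.+1).
Proof.
move=> Sx nxy kl ly; apply/eqP => xy.
have {}xy : x = cyc (y + (l - k)).
  apply/val_inj; move/(congr1 val): xy => /= /eqP.
  rewrite (_ : y + l.+1 = y + (l - k) + k.+1); last by lia.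
  by rewrite eqn_modDr modn_small => // /eqP.
case: (posnP (l - k)) => [lk|lk].
  by move: nxy; rewrite xy lk addn0 cyc_val eqxx.
move: Sx; rewrite xy -(prednK lk) (mem_run_len (k := l)) //; lia.
Qed.

Lemma runs_disjoint x y :
  x \in run_starts -> y \in run_starts -> x != y -> [disjoint run x & run y].
Proof.
rewrite !inE => /andP [Sx _] /andP [Sy _] nxy; rewrite -setI_eq0; apply/eqP/setP => i.
rewrite !inE; apply/negP => /andP [/imsetP [k _ ->] /imsetP [l _ /eqP]].
have [kl|lk] := leqP k l; first by rewrite (negbTE (run_overlap Sx nxy kl (ltn_ord l))).
by rewrite eq_sym (negbTE (run_overlap Sy _ (ltnW lk) (ltn_ord k))) // eq_sym.
Qed.

Lemma run_len_add_le x y : x \in run_starts -> y \in run_starts -> x != y ->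
  run_len x + run_len y <= #|S|.
Proof.
move=> Rx Ry xy; rewrite -!card_run -cardsUI.
rewrite (eqP (_ : run x :&: run y == set0)) ?setI_eq0 ?runs_disjoint // cards0 addn0.
by apply: subset_leq_card; rewrite subUset !run_sub.
Qed.

Lemma mem_run_last i : i \in run (cyc n.-1) -> exists2 k, k < run_len (cyc n.-1) & i = cyc k.
Proof.
case/imsetP => k _ ->; exists (nat_of_ord k) => //.
by rewrite addnC cycDr addSn -addnS prednK // cycDn.
Qed.

End CyclicRuns.

Local Open Scope ring_scope.

(** * Power moments *)

Section PowerMoments.
Variables (R : comNzRingType) (I : finType) (P : pred I) (a x : I -> R).

Definition power_moment j := \sum_(i | P i) a i * x i ^+ j.

Lemma power_moment_horner (Q : {poly R}) :
  \sum_(i | P i) a i * Q.[x i] = \sum_(l < size Q) Q`_l * power_moment l.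
Proof.
under eq_bigr => i _ do rewrite horner_coef mulr_sumr.
rewrite exchange_big /=; apply: eq_bigr => l _; rewrite mulr_sumr.
by apply: eq_bigr => i _; rewrite mulrCA.
Qed.

Let vanish_on_roots (s : seq R) k :
  (forall i, P i -> a i != 0 -> x i \in s) ->
  \sum_(i | P i) a i * (x i ^+ k * \prod_(y <- s) (x i - y)) = 0.
Proof.
move=> xs; apply: big1 => i Pi; have [->|ai] := eqVneq (a i) 0; first by rewrite mul0r.
have -> : \prod_(y <- s) (x i - y) = 0.
  by rewrite (big_rem _ (xs i Pi ai)) subrr; exact: mul0r.
by rewrite !mulr0.
Qed.

Lemma power_moments_of_3_points y1 y2 y3 :
  (forall i, P i -> a i != 0 -> x i \in [:: y1; y2; y3]) ->
  power_moment 0 = 0 -> power_moment 1 = 0 ->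
  power_moment 3 = (y1 + y2 + y3) * power_moment 2 /\
  2 * power_moment 4 =
    ((y1 + y2 + y3) ^+ 2 + (y1 ^+ 2 + y2 ^+ 2 + y3 ^+ 2)) * power_moment 2.
Proof.
move=> xs m0 m1; have := vanish_on_roots 0 xs; have := vanish_on_roots 1 xs.
rewrite /power_moment in m0 m1 *; set e1 := y1 + y2 + y3; set e2 := y1 * y2 + y1 * y3 + y2 * y3.
have expand k : \sum_(i | P i) a i * (x i ^+ k * \prod_(y <- [:: y1; y2; y3]) (x i - y)) =
  \sum_(i | P i) a i * x i ^+ k.+3 + (- e1) * \sum_(i | P i) a i * x i ^+ k.+2 +
  e2 * \sum_(i | P i) a i * x i ^+ k.+1 + (- (y1 * y2 * y3)) * \sum_(i | P i) a i * x i ^+ k.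
  rewrite !mulr_sumr -!big_split; apply: eq_bigr => i _.
  by rewrite !big_cons big_nil !exprS /e1 /e2 /=; ring.
rewrite !expand m0 m1 !mulr0 !addr0 => h4 h3.
have e3 : \sum_(i | P i) a i * x i ^+ 3 = e1 * \sum_(i | P i) a i * x i ^+ 2.
  by apply/eqP; rewrite -subr_eq0; apply/eqP; rewrite -[RHS]h3; ring.
split=> //; apply/eqP; rewrite -subr_eq0; apply/eqP.
by rewrite -[RHS](mulr0 (2 : R)) -[in RHS]h4 e3 /e1 /e2; ring.
Qed.

Lemma power_moment4_of_4_points y1 y2 y3 y4 :
  (forall i, P i -> a i != 0 -> x i \in [:: y1; y2; y3; y4]) ->
  power_moment 0 = 0 -> power_moment 1 = 0 ->
  power_moment 4 = (y1 + y2 + y3 + y4) * power_moment 3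
    - (y1 * y2 + y1 * y3 + y1 * y4 + y2 * y3 + y2 * y4 + y3 * y4) * power_moment 2.
Proof.
move=> xs m0 m1; have := vanish_on_roots 0 xs; rewrite /power_moment in m0 m1 *.
set e1 := y1 + y2 + y3 + y4; set e2 := y1 * y2 + y1 * y3 + y1 * y4 + y2 * y3 + y2 * y4 + y3 * y4.
set e3 := y1 * y2 * y3 + y1 * y2 * y4 + y1 * y3 * y4 + y2 * y3 * y4.
have -> : \sum_(i | P i) a i * (x i ^+ 0 * \prod_(y <- [:: y1; y2; y3; y4]) (x i - y)) =
  \sum_(i | P i) a i * x i ^+ 4 + (- e1) * \sum_(i | P i) a i * x i ^+ 3 +
  e2 * \sum_(i | P i) a i * x i ^+ 2 + (- e3) * \sum_(i | P i) a i * x i ^+ 1 +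
  (y1 * y2 * y3 * y4) * \sum_(i | P i) a i * x i ^+ 0.
  rewrite !mulr_sumr -!big_split; apply: eq_bigr => i _.
  by rewrite !big_cons big_nil /e1 /e2 /e3 /=; ring.
rewrite m0 m1 !mulr0 !addr0 => h; apply/eqP; rewrite -subr_eq0; apply/eqP.
by rewrite -[RHS]h; ring.
Qed.

End PowerMoments.

Section Vandermonde.
Variables (R : idomainType) (I : finType) (P : pred I) (a x : I -> R).

Lemma power_moments_support_eq0 m :
  {in P &, injective x} -> (forall j, (j < m)%N -> power_moment P a x j = 0) ->
  (#|[set i | P i & a i != 0%R]| <= m)%N -> [set i | P i & a i != 0] = set0.
Proof.
move=> xinj mom0 Am; apply/eqP/set0Pn => -[i0 Ai0].
set A := [set i | P i & a i != 0] in Am Ai0.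
have [Pi0 ai0] : P i0 /\ a i0 != 0 by move: Ai0; rewrite inE => /andP.
pose Q := \prod_(i <- enum (A :\ i0)) ('X - (x i)%:P).
have sizeQ : (size Q <= m)%N.
  by move: Am; rewrite (cardsD1 i0) Ai0 size_prod_XsubC -cardE.
have Q_root i : i \in A :\ i0 -> Q.[x i] = 0.
  move=> Ai; rewrite horner_prod (big_rem i) ?mem_enum //= hornerXsubC subrr.
  exact: mul0r.
have Q_i0 : Q.[x i0] != 0.
  rewrite horner_prod prodf_seq_neq0; apply/allP => i; rewrite mem_enum !inE.
  rewrite hornerXsubC subr_eq0; case/and3P=> ne Pi _.
  by apply: contraNneq ne => /xinj -> //.
have : \sum_(i | P i) a i * Q.[x i] = a i0 * Q.[x i0].
  rewrite (bigD1 i0) //= big1 ?addr0 // => i /andP [Pi ne].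
  have [->|ai] := eqVneq (a i) 0; first by rewrite mul0r.
  by rewrite Q_root ?mulr0 // !inE ne Pi ai.
rewrite power_moment_horner big1 => [/esym/eqP|l _]; first by rewrite (negbTE (mulf_neq0 ai0 Q_i0)).
by rewrite mom0 ?mulr0 // (leq_trans (ltn_ord l)).
Qed.

End Vandermonde.

(** * Size of a kernel with an information set *)

Section SystematicCount.
Variables (V : finZmodType) (n k : nat).
Hypothesis k_le_n : (k <= n)%N.
Variable f : {ffun 'I_n -> V} -> {ffun 'I_k -> V}.
Hypothesis fB : {morph f : x y / x - y}.
Hypothesis f_prefix : forall c, f c = 0 -> (forall i : 'I_n, (k <= i)%N -> c i = 0) -> c = 0.

Let cast_n := cast_ord (subnKC k_le_n).

Definition join_ffun (z : {ffun 'I_k -> V}) (v : {ffun 'I_(n - k) -> V}) : {ffun 'I_n -> V} :=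
  [ffun i => match split (cast_ord (esym (subnKC k_le_n)) i) with inl j => z j | inr j => v j end].

Definition suffix (c : {ffun 'I_n -> V}) : {ffun 'I_(n - k) -> V} :=
  [ffun j => c (cast_n (rshift k j))].

Lemma suffix_join z v : suffix (join_ffun z v) = v.
Proof. by apply/ffunP => j; rewrite !ffunE cast_ordK -/(unsplit (inr _)) unsplitK. Qed.

Lemma join_ffunD z1 z2 v1 v2 :
  join_ffun z1 v1 + join_ffun z2 v2 = join_ffun (z1 + z2) (v1 + v2).
Proof. by apply/ffunP => i; rewrite !ffunE; case: split => j; rewrite ffunE. Qed.

Let f0 : f 0 = 0.
Proof. by rewrite -(subrr 0) fB subrr. Qed.

Let fD x y : f (x + y) = f x + f y.
Proof.
have fN z : f (- z) = - f z by rewrite -sub0r fB f0 sub0r.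
by rewrite -{1}[y]opprK fB fN opprK.
Qed.

Let ker_prefix_inj : injective (fun z => f (join_ffun z 0)).
Proof.
move=> z1 z2 /eqP; rewrite -subr_eq0 -fB => /eqP /f_prefix hz.
have {}hz : join_ffun z1 0 - join_ffun z2 0 = 0.
  apply: hz => i ki; rewrite !ffunE; case: splitP => [j /= ij|j _]; last by rewrite !ffunE subrr.
  by move: (ltn_ord j); rewrite -ij ltnNge ki.
apply/ffunP => j; apply/eqP; rewrite -subr_eq0; apply/eqP.
have := congr1 (fun c : {ffun 'I_n -> V} => c (cast_n (lshift (n - k) j))) hz.
by rewrite !ffunE cast_ordK -/(unsplit (inl _)) unsplitK.
Qed.

Lemma kernel_suffix_onto v : exists2 c, f c = 0 & suffix c = v.
Proof.
have /codomP [z fz] := inj_card_onto ker_prefix_inj (leqnn _) (- f (join_ffun 0 v)).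
exists (join_ffun z v); last exact: suffix_join.
by rewrite -[z]addr0 -[v]add0r -join_ffunD fD -fz addNr.
Qed.

Lemma card_kernel : #|[set c | f c == 0]| = (#|V| ^ (n - k))%N.
Proof.
have suffix_inj : {in [set c | f c == 0] &, injective suffix}.
  move=> x y; rewrite !inE => /eqP fx /eqP fy xy; apply/eqP; rewrite -subr_eq0; apply/eqP.
  apply: f_prefix => [|i ki]; first by rewrite fB fx fy subrr.
  have ik : (i - k < n - k)%N by have := ltn_ord i; lia.
  have -> : i = cast_n (rshift k (Ordinal ik)) by apply: val_inj; rewrite /= subnKC.
  have := congr1 (fun s : {ffun 'I_(n - k) -> V} => s (Ordinal ik)) xy; rewrite !ffunE => ->.
  exact: subrr.
rewrite -(card_in_imset suffix_inj) (_ : _ @: _ = setT) ?cardsT ?card_ffun ?card_ord //.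
by apply/setP => v; rewrite !inE; have [c fc <-] := kernel_suffix_onto v; rewrite imset_f ?inE ?fc.
Qed.

End SystematicCount.

(** * The code *)

Lemma cube_root_of_unity (F : finFieldType) :
  (3 %| #|F|.-1)%N -> exists w : F, w ^+ 2 + w + 1 = 0.
Proof.
rewrite -card_finField_unit => /(Cauchy (isT : prime 3)) [u _ u3].
have u_neq1 : val u != 1.
  apply: contra_eqN u3 => /eqP u1; rewrite (_ : u = 1%g) ?order1 //; exact: val_inj.
exists (val u); apply/eqP; rewrite -(mulrI_eq0 _ (lregP (_ : val u - 1 != 0))) ?subr_eq0 //.
have -> : (val u - 1) * (val u ^+ 2 + val u + 1) = val u ^+ 3 - 1 by ring.
by rewrite -FinRing.val_unitX -u3 expg_order subrr.
Qed.

Lemma eq0_of_combination (R : idomainType) (l a b u v : R) :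
  u * a + v * b != 0 -> l * a = 0 -> l * b = 0 -> l = 0.
Proof.
move=> uv la lb; apply/eqP; rewrite -(mulrI_eq0 _ (lregP uv)) mulrDl -!mulrA.
by rewrite ![_ * l]mulrC la lb !mulr0 addr0.
Qed.

Section CubeRootCode.
Variable p : nat.
Hypothesis p_prime : prime p.
Hypothesis p_gt5 : (5 < p)%N.
Local Notation F := 'F_p.
Variable w : F.
Hypothesis w_root : w ^+ 2 + w + 1 = 0.
Local Notation n := (3 * p)%N.

Let w2 : w ^+ 2 = - w - 1.
Proof. by apply/eqP; rewrite -subr_eq0 -w_root; apply/eqP; ring. Qed.

Lemma smooth_natr_neq0 (N : nat) :
  (0 < N)%N -> all (fun q => q <= 5)%N (primes N) -> N%:R != 0 :> F.
Proof.
move=> N_gt0 small; rewrite -(dvdn_pcharf (pchar_Fp p_prime)); apply/negP => pN.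
have : p \in primes N by rewrite mem_primes p_prime N_gt0.
by move/(allP small); rewrite leqNgt p_gt5.
Qed.

Lemma w3 : w ^+ 3 = 1.
Proof. by ring: w2. Qed.

Lemma w_neq0 : w != 0.
Proof. by apply: contra_eq_neq w3 => ->; rewrite expr0n eq_sym oner_eq0. Qed.

Lemma expr_mod3 x : w ^+ (x %% 3) = w ^+ x.
Proof. by rewrite {2}(divn_eq x 3) exprD mulnC exprM w3 expr1n mul1r. Qed.

Lemma dft3_kernel a0 a1 a2 :
  a0 + a1 + a2 = 0 -> a0 + w * a1 + w ^+ 2 * a2 = 0 -> a1 = w * a0 /\ a2 = w ^+ 2 * a0.
Proof.
move=> e0 e1.
have a1E : a1 = w * a0.
  have sqrt_m3 : (2 * w + 1) ^+ 2 = - 3%:R by ring: w2.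
  have : (2 * w + 1) * (a1 - w * a0) = (a0 + w * a1 + w ^+ 2 * a2) - w ^+ 2 * (a0 + a1 + a2).
    by ring: w2.
  rewrite e0 e1 mulr0 subrr => /eqP; rewrite mulf_eq0 subr_eq0 => /orP [/eqP h|/eqP //].
  move: sqrt_m3; rewrite h expr0n /= => /eqP.
  by rewrite eq_sym oppr_eq0 (negbTE (smooth_natr_neq0 _ _)).
split=> //; apply/eqP; rewrite -subr_eq0 -e0 a1E; apply/eqP; ring: w2.
Qed.

Lemma n_gt0 : (0 < n)%N.
Proof. by rewrite muln_gt0 (prime_gt0 p_prime). Qed.

Lemma n_ge10 : (10 <= n)%N.
Proof. by move: p_gt5; lia. Qed.

Local Notation cyc := (cyc n_gt0).
Local Notation run := (run n_gt0).
Local Notation run_len := (run_len n_gt0).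

Lemma natr_modn x : ((x %% n)%:R : F) = x%:R.
Proof. by rewrite -(Fp_nat_mod p_prime) (modn_dvdm _ (dvdn_mull 3 (dvdnn p))) Fp_nat_mod. Qed.

Lemma natr_ord_pred (i : 'I_n) : ((ord_pred i : nat)%:R : F) = i%:R - 1.
Proof.
apply: (addIr 1); rewrite subrK -mulrSr -natr_modn.
by rewrite -[(_.+1 %% n)%N]/(nat_of_ord (ordS (ord_pred i))) ord_predK.
Qed.

Lemma cyc_mod3 x : (cyc x %% 3 = x %% 3)%N.
Proof. by rewrite /= (modn_dvdm _ (dvdn_mulr p (dvdnn 3))). Qed.

Lemma ord_pred_mod3 (i : 'I_n) : (ord_pred i %% 3 = (i + 2) %% 3)%N.
Proof. by rewrite /= (modn_dvdm _ (dvdn_mulr p (dvdnn 3))); have := prime_gt0 p_prime; lia. Qed.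

Lemma natr_inj_mod3 (i j : 'I_n) : (i %% 3 = j %% 3)%N -> (i%:R : F) = j%:R -> i = j.
Proof.
move=> ij3 ijp; apply/ord_inj/eqP; rewrite -(modn_small (ltn_ord i)) -(modn_small (ltn_ord j)).
rewrite chinese_remainder ?prime_coprime ?dvdn_prime2 //; last by lia.
by rewrite ij3 -!(val_Fp_nat p_prime) ijp !eqxx.
Qed.

Definition moment k j (c : word F n) :=
  power_moment predT (fun i : 'I_n => c i * w ^+ (k * i)) (fun i => i%:R) j.

Definition class_moment t j (c : word F n) :=
  power_moment (fun i : 'I_n => i %% 3 == t)%N c (fun i => i%:R) j.

Lemma moment_classes k j c :
  moment k j c = \sum_(t < 3) w ^+ (k * t) * class_moment t j c.
Proof.
rewrite /moment /power_moment.
rewrite (partition_big (fun i : 'I_n => Ordinal (ltn_pmod i (isT : 0 < 3)%N)) xpredT) //=.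
apply: eq_bigr => t _; rewrite /class_moment /power_moment mulr_sumr.
apply: eq_big => [i|i /eqP it]; first by rewrite -val_eqE.
by rewrite -it /= !(mulnC k) !exprM expr_mod3 mulrCA mulrA.
Qed.

(* The repeated-root cyclic code with generator polynomial (x - 1)^5 (x - w)^3 (x - w^2)^2:
   its twisted moments vanish below the multiplicity [root_mult k] of the root w^k. *)
Definition root_mult k := nth 0%N [:: 5; 3; 2]%N k.

Definition checks := [seq (k, j) | k <- iota 0 3, j <- iota 0 (root_mult k)].

Definition syndrome (c : word F n) : {ffun 'I_10 -> F} :=
  [ffun l : 'I_10 => moment (nth (0, 0)%N checks l).1 (nth (0, 0)%N checks l).2 c].

Definition code := [set c | syndrome c == 0].

Lemma mem_checks k j : ((k, j) \in checks) = (k < 3)%N && (j < root_mult k)%N.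
Proof.
apply/allpairsPdep/andP => [[k' [j' [+ + [-> ->]]]]|[k3 jk]].
  by rewrite !mem_iota.
by exists k, j; rewrite !mem_iota.
Qed.

Lemma codeP c :
  reflect (forall k j, (k < 3)%N -> (j < root_mult k)%N -> moment k j c = 0) (c \in code).
Proof.
rewrite inE; apply: (iffP eqP) => [c0 k j k3 jk|mom0].
  have kj : (index (k, j) checks < 10)%N.
    by rewrite -[10%N]/(size checks) index_mem mem_checks k3.
  have := congr1 (fun s : {ffun 'I_10 -> F} => s (Ordinal kj)) c0.
  by rewrite !ffunE nth_index // -index_mem.
apply/ffunP => l; rewrite !ffunE; have := mem_nth (0, 0)%N (_ : (l < size checks)%N).
by case: nth => k j; rewrite mem_checks => /(_ (ltn_ord l)) /andP [k3 jk]; exact: mom0.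
Qed.

Lemma expr_mulmod3 k a b : (a %% 3 = b %% 3)%N -> w ^+ (k * a) = w ^+ (k * b).
Proof. by move=> ab; rewrite -expr_mod3 -modnMmr ab modnMmr expr_mod3. Qed.

Lemma moment_classes3 k j c : moment k j c =
  class_moment 0 j c + w ^+ k * class_moment 1 j c + (w ^+ k) ^+ 2 * class_moment 2 j c.
Proof.
by rewrite moment_classes !big_ord_recr big_ord0 /= add0r muln0 muln1 expr0 mul1r exprM.
Qed.

Section Codeword.
Variable c : word F n.
Hypothesis c_code : c \in code.

Lemma class_moment_lt2 t j : (t < 3)%N -> (j < 2)%N -> class_moment t j c = 0.
Proof.
move=> t3 j2; have mom0 k : (k < 3)%N -> moment k j c = 0.
  move=> k3; apply: (codeP _ c_code) => //.
  by case: k k3 => [|[|[|]]] //= _; rewrite /root_mult /=; lia.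
have := mom0 0%N isT; have := mom0 1%N isT; have := mom0 2%N isT.
rewrite !moment_classes3 expr0 expr1n !mul1r expr1 => e2 e1 e0.
have [a1E a2E] := dft3_kernel e0 e1; move: e2; rewrite a1E a2E.
have -> : forall a : F, a + w ^+ 2 * (w * a) + (w ^+ 2) ^+ 2 * (w ^+ 2 * a) = 3%:R * a.
  by move=> a; ring: w2.
move/eqP; rewrite mulf_eq0 (negbTE (smooth_natr_neq0 _ _)) //= => /eqP a0.
by case: t t3 => [|[|[|]]] // _; rewrite ?a1E ?a2E a0 mulr0.
Qed.

Lemma class_moment2 t : (t < 3)%N -> class_moment t 2 c = w ^+ t * class_moment 0 2 c.
Proof.
have mom0 k : (k < 2)%N -> moment k 2 c = 0.
  by move=> k2; apply: (codeP _ c_code) => //; case: k k2 => [|[|]].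
have := mom0 0%N isT; have := mom0 1%N isT.
rewrite !moment_classes3 expr0 expr1n !mul1r expr1 => e1 e0.
have [a1E a2E] := dft3_kernel e0 e1.
by case: t => [|[|[|]]] // _; rewrite ?expr0 ?mul1r ?expr1.
Qed.

Lemma sum_class_moments j : (j < 5)%N -> \sum_(t < 3) class_moment t j c = 0.
Proof.
move=> j5; have := (codeP _ c_code) 0%N j isT j5; rewrite moment_classes => e.
by rewrite -[RHS]e; apply: eq_bigr => t _; rewrite mul0n expr0 mul1r.
Qed.

End Codeword.

Definition supp (c : word F n) := [set i | c i != 0].

Definition class_supp (c : word F n) t := [set i : 'I_n | (i %% 3 == t)%N & c i != 0].

Lemma class_supp_eq0 c t m : (forall j, (j < m)%N -> class_moment t j c = 0) ->
  (#|class_supp c t| <= m)%N -> class_supp c t = set0.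
Proof.
move=> mom0 cm; apply: (power_moments_support_eq0 (x := fun i : 'I_n => (i : nat)%:R)) cm.
- by move=> i j /= /eqP it /eqP jt; apply: natr_inj_mod3; rewrite it jt.
- exact: mom0.
Qed.

Lemma class_supp_card c t m : (forall j, (j < m)%N -> class_moment t j c = 0) ->
  class_supp c t != set0 -> (m < #|class_supp c t|)%N.
Proof. by move=> mom0; apply: contraR; rewrite -leqNgt => /(class_supp_eq0 mom0) ->. Qed.

Lemma card_class_supp_le c t (T : seq F) :
  (forall i, i \in class_supp c t -> (i : nat)%:R \in T) -> (#|class_supp c t| <= size T)%N.
Proof.
move=> inT; rewrite -(card_in_imset (f := fun i : 'I_n => (i : nat)%:R : F)).
  by apply: leq_trans (card_size T); apply/subset_leq_card/subsetP => _ /imsetP [i /inT ? ->].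
move=> i j; rewrite !inE => /andP [/eqP it _] /andP [/eqP jt _].
by apply: natr_inj_mod3; rewrite it jt.
Qed.

Lemma class_moment_supp0 c t j : class_supp c t = set0 -> class_moment t j c = 0.
Proof.
move=> c0; apply: big1 => i it; have /negbT := in_set0 i; rewrite -c0 inE it /= negbK.
by move/eqP ->; rewrite mul0r.
Qed.

Lemma card_supp_classes c :
  #|supp c| = (#|class_supp c 0| + #|class_supp c 1| + #|class_supp c 2|)%N.
Proof.
rewrite -sum1_card.
rewrite (partition_big (fun i : 'I_n => Ordinal (ltn_pmod i (isT : 0 < 3)%N)) xpredT) //=.
rewrite !big_ord_recr big_ord0 /= add0n -!sum1_card.
by congr (_ + _ + _)%N; apply: eq_bigl => i; rewrite !inE andbC -val_eqE.
Qed.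

Lemma supp_neq0 (c : word F n) : c != 0 -> exists i, i \in supp c.
Proof.
move=> c_neq0; apply/existsP; apply: contraR c_neq0 => /existsPn c0; apply/eqP/ffunP => i.
by rewrite ffunE; apply/eqP; have := c0 i; rewrite inE negbK.
Qed.

Lemma class_supp0 t : class_supp 0 t = set0.
Proof. by apply/setP => i; rewrite !inE ffunE eqxx andbF. Qed.

Lemma class_supp_sub c t : class_supp c t \subset supp c.
Proof. by apply/subsetP => i; rewrite !inE => /andP []. Qed.

Lemma class_supp_mod3 c t (i : 'I_n) : class_supp c t = set0 -> i \in supp c -> (i %% 3 != t)%N.
Proof.
by move=> c0; rewrite inE => ci; apply/eqP => it; have := in_set0 i; rewrite -c0 inE it eqxx ci.
Qed.

Definition pair_weight (c : word F n) := #|[set i | (c i != 0) || (c (ordS i) != 0)]|.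

Lemma pair_dist_weight x y : pair_dist x y = pair_weight (x - y).
Proof. by apply: eq_card => i; rewrite !inE !ffunE !subr_eq0. Qed.

Lemma pair_weight_supp c : pair_weight c = (#|supp c| + #|run_starts (supp c)|)%N.
Proof. by rewrite -card_pair_cover; apply: eq_card => i; rewrite !inE. Qed.

Definition rot s (c : word F n) : word F n := [ffun i : 'I_n => c (cyc (s + i))].

Lemma rot1_code c : c \in code -> rot 1 c \in code.
Proof.
move=> c_code; apply/codeP => k j k3 jk.
apply/eqP; rewrite -(mulrI_eq0 _ (lregP (expf_neq0 k w_neq0))); apply/eqP.
have -> : w ^+ k * moment k j (rot 1 c) =
    \sum_(i | predT i) (c i * w ^+ (k * i)) * (('X - 1%:P) ^+ j).[(i : nat)%:R].
  rewrite /moment /power_moment mulr_sumr (reindex_inj (@ord_pred_inj n)).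
  apply: eq_bigr => i _; rewrite ffunE add1n -ordS_cyc cyc_val ord_predK natr_ord_pred.
  have wk : w ^+ k * w ^+ (k * ord_pred i) = w ^+ (k * i).
    rewrite -exprD -{1}(muln1 k) -mulnDr; apply: expr_mulmod3.
    by rewrite -modnDmr ord_pred_mod3 modnDmr; lia.
  by rewrite horner_exp hornerXsubC -wk !mulrA [w ^+ k * c i]mulrC.
rewrite power_moment_horner big1 // => l _; rewrite -/(moment k l c) (codeP _ c_code) ?mulr0 //.
by apply: leq_trans jk; rewrite -[j.+1](size_exp_XsubC j (1 : F)).
Qed.

Lemma rot_code s c : c \in code -> rot s c \in code.
Proof.
elim: s => [|s IH] c_code.
  by rewrite (_ : rot 0 c = c) //; apply/ffunP => i; rewrite ffunE add0n cyc_val.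
rewrite (_ : rot s.+1 c = rot 1 (rot s c)); first exact/rot1_code/IH.
by apply/ffunP => i; rewrite !ffunE cycDr addnA addn1.
Qed.

Lemma pair_weight_rot s c : pair_weight (rot s c) = pair_weight c.
Proof.
have g_inj : injective (fun i : 'I_n => cyc (s + i)).
  by move=> i j /eqP; rewrite cyc_eq // => /eqP /val_inj.
rewrite /pair_weight -[RHS](card_preimset _ g_inj); apply: eq_card => i; rewrite !inE !ffunE.
have -> : ordS i = cyc i.+1 by rewrite -ordS_cyc cyc_val.
by rewrite cycDr addnS -ordS_cyc.
Qed.

Lemma rot_run_start c x :
  x \in run_starts (supp c) -> cyc n.-1 \in run_starts (supp (rot x.+1 c)).
Proof.
have n1 : n.-1.+1 = n by rewrite prednK ?n_gt0.
have e1 : cyc (x.+1 + cyc n.-1) = x by rewrite cycDr addSn -addnS n1 cycDn cyc_val.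
have e2 : cyc (x.+1 + ordS (cyc n.-1)) = ordS x.
  by rewrite ordS_cyc n1 cycDr cycDn -ordS_cyc cyc_val.
by rewrite !inE !ffunE e1 e2.
Qed.

Lemma supp_classes_eq0 c : (forall t, (t < 3)%N -> class_supp c t = set0) -> c = 0.
Proof.
move=> c0; have /eqP := card_supp_classes c; rewrite !c0 // !cards0 cards_eq0 => /eqP S0.
apply/ffunP => i; rewrite ffunE; apply/eqP.
by have := in_set0 i; rewrite -S0 inE => /negbFE.
Qed.

(* The values i mod p of the positions k < a and 3q + k with d <= k < d + b lying in the
   residue class t mod 3, where E stands for 3q. *)
Definition run_values (a d b : nat) (E : F) (t : nat) : seq F :=
  [seq k%:R | k <- iota 0 a & (k %% 3 == t)%N] ++ [seq E + k%:R | k <- iota d b & (k %% 3 == t)%N].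

Lemma mem_run_values (c : word F n) a d b q :
  (forall i : 'I_n, c i != 0 ->
     (exists2 k, (k < a)%N & i = cyc k) \/ (exists2 k, (d <= k < d + b)%N & i = cyc (3 * q + k))) ->
  forall i : 'I_n, c i != 0 -> (i : nat)%:R \in run_values a d b (3 * q)%:R (i %% 3)%N.
Proof.
move=> runs i ci; rewrite mem_cat; apply/orP.
case: (runs i ci) => [[k ka ->]|[k kb ->]]; [left|right]; apply/mapP; exists k.
- by rewrite mem_filter cyc_mod3 eqxx mem_iota.
- by rewrite /= natr_modn.
- by rewrite mem_filter cyc_mod3 mem_iota kb andbT; apply/eqP; lia.
- by rewrite /= natr_modn natrD.
Qed.

Definition twisted_e1 (T : nat -> seq F) := \sum_(t < 3) w ^+ t * \sum_(y <- T t) y.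

(* Twice the complete homogeneous symmetric polynomial of degree 2, as in the recurrence
   giving the moment of order 4 of a class supported on three points. *)
Definition twisted_h2 (T : nat -> seq F) :=
  \sum_(t < 3) w ^+ t * ((\sum_(y <- T t) y) ^+ 2 + \sum_(y <- T t) y ^+ 2).

Lemma class_moments_of_3_points c t y1 y2 y3 : c \in code -> (t < 3)%N ->
  (forall i : 'I_n, (i %% 3 == t)%N -> c i != 0 -> (i : nat)%:R \in [:: y1; y2; y3]) ->
  class_moment t 3 c = (y1 + y2 + y3) * (w ^+ t * class_moment 0 2 c) /\
  2 * class_moment t 4 c =
    ((y1 + y2 + y3) ^+ 2 + (y1 ^+ 2 + y2 ^+ 2 + y3 ^+ 2)) * (w ^+ t * class_moment 0 2 c).
Proof.
move=> c_code t3 vt; rewrite -class_moment2 //.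
exact: (power_moments_of_3_points vt (class_moment_lt2 c_code t3 (isT : 0 < 2)%N)
  (class_moment_lt2 c_code t3 (isT : 1 < 2)%N)).
Qed.

Lemma twisted_sums_relations c (T : nat -> seq F) : c \in code ->
  (forall t, (t < 3)%N -> size (T t) = 3%N) ->
  (forall i : 'I_n, c i != 0 -> (i : nat)%:R \in T (i %% 3)%N) ->
  class_moment 0 2 c * twisted_e1 T = 0 /\ class_moment 0 2 c * twisted_h2 T = 0.
Proof.
move=> c_code T3 cT.
have rel (t : 'I_3) :
    class_moment t 3 c = (\sum_(y <- T t) y) * (w ^+ t * class_moment 0 2 c) /\
    2 * class_moment t 4 c =
      ((\sum_(y <- T t) y) ^+ 2 + \sum_(y <- T t) y ^+ 2) * (w ^+ t * class_moment 0 2 c).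
  have vt (i : 'I_n) : (i %% 3 == t)%N -> c i != 0 -> (i : nat)%:R \in T t.
    by move=> /eqP <-; exact: cT.
  case: (T t) (T3 t (ltn_ord t)) vt => [|y1 [|y2 [|y3 [|]]]] // _ vt.
  have [m3 m4] := class_moments_of_3_points c_code (ltn_ord t) vt.
  by rewrite m3 m4 !big_cons !big_nil; split; ring.
have s3 := sum_class_moments c_code (isT : 3 < 5)%N.
have s4 := sum_class_moments c_code (isT : 4 < 5)%N.
split.
  rewrite -[RHS]s3 /twisted_e1 mulr_sumr; apply: eq_bigr => t _.
  by rewrite (rel t).1; ring.
rewrite -[RHS](mulr0 2) -[in RHS]s4 /twisted_h2 !mulr_sumr; apply: eq_bigr => t _.
by rewrite (rel t).2; ring.
Qed.

Lemma class_supp_eq0_of_values c (T : nat -> seq F) t m : c \in code ->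
  (forall j, (j < m)%N -> class_moment t j c = 0) ->
  (forall i : 'I_n, c i != 0 -> (i : nat)%:R \in T (i %% 3)%N) ->
  (size (T t) <= m)%N -> class_supp c t = set0.
Proof.
move=> c_code mom0 cT Tt; apply: class_supp_eq0 mom0 (leq_trans (card_class_supp_le _) Tt).
by move=> i; rewrite inE => /andP [/eqP <- ci]; exact: cT.
Qed.

Lemma some_class_eq0_of_2_values c (T : nat -> seq F) t : c \in code -> (t < 3)%N ->
  (forall i : 'I_n, c i != 0 -> (i : nat)%:R \in T (i %% 3)%N) ->
  (size (T t) <= 2)%N -> exists2 t, (t < 3)%N & class_supp c t = set0.
Proof.
move=> c_code t3 cT Tt; exists t => //.
by apply: (class_supp_eq0_of_values (m := 2)) cT Tt => // j; exact: class_moment_lt2.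
Qed.

Lemma some_class_eq0_of_certificate c (T : nat -> seq F) (U V : F) (N : nat) : c \in code ->
  (forall i : 'I_n, c i != 0 -> (i : nat)%:R \in T (i %% 3)%N) ->
  all (fun t => size (T t) == 3%N) (iota 0 3) ->
  (0 < N)%N -> all (fun q => q <= 5)%N (primes N) ->
  U * twisted_e1 T + V * twisted_h2 T = N%:R ->
  exists2 t, (t < 3)%N & class_supp c t = set0.
Proof.
move=> c_code cT /allP T3 N0 N5 UV.
have {}T3 t : (t < 3)%N -> size (T t) = 3%N.
  by move=> t3; apply/eqP/T3; rewrite mem_iota.
have [l1 l2] := twisted_sums_relations c_code T3 cT.
have l0 : class_moment 0 2 c = 0.
  by apply: (eq0_of_combination (u := U) (v := V)) l1 l2; rewrite UV smooth_natr_neq0.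
exists 0%N => //; apply: (class_supp_eq0_of_values (m := 3)) cT _ => //; last by rewrite T3.
by case=> [|[|[|j]]] // _; rewrite ?l0 // class_moment_lt2.
Qed.

Lemma window10_eq0 c : c \in code -> (forall i : 'I_n, (10 <= i)%N -> c i = 0) -> c = 0.
Proof.
move=> c_code c10.
have cT : forall i : 'I_n, c i != 0 -> (i : nat)%:R \in run_values 10 0 0 (3 * 0)%:R (i %% 3)%N.
  apply: mem_run_values => i ci; left; exists (nat_of_ord i); last by rewrite cyc_val.
  by rewrite ltnNge; apply: contra ci => /c10 ->.
have vt t (i : 'I_n) : (i %% 3 == t)%N -> c i != 0 ->
    (i : nat)%:R \in run_values 10 0 0 (3 * 0)%:R t.
  by move=> /eqP <-; exact: cT.
have [m13 m14] := class_moments_of_3_points c_code (isT : 1 < 3)%N (vt 1%N).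
have [m23 m24] := class_moments_of_3_points c_code (isT : 2 < 3)%N (vt 2%N).
have m04 := power_moment4_of_4_points (P := fun i : 'I_n => (i %% 3 == 0)%N) (a := c)
  (x := fun i : 'I_n => (i : nat)%:R) (vt 0%N)
  (class_moment_lt2 c_code (isT : 0 < 3)%N (isT : 0 < 2)%N)
  (class_moment_lt2 c_code (isT : 0 < 3)%N (isT : 1 < 2)%N).
rewrite -/(class_moment 0 4 c) -/(class_moment 0 3 c) -/(class_moment 0 2 c) in m04.
have s j : (j < 5)%N -> class_moment 0 j c + class_moment 1 j c + class_moment 2 j c = 0.
  by move=> j5; rewrite -[RHS](sum_class_moments c_code j5) !big_ord_recr big_ord0 /= add0r.
have l0 : class_moment 0 2 c = 0.
  have : 24%:R * class_moment 0 2 c =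
      2 * (class_moment 0 4 c + class_moment 1 4 c + class_moment 2 4 c)
      - 36%:R * (class_moment 0 3 c + class_moment 1 3 c + class_moment 2 3 c).
    by rewrite !mulrDr m14 m24 m04 m13 m23; ring: w2.
  rewrite !s // !mulr0 subrr => /eqP; rewrite mulf_eq0 (negbTE (smooth_natr_neq0 _ _)) //=.
  by move/eqP.
have c12 t : (0 < t < 3)%N -> class_supp c t = set0.
  case/andP=> t0 t3; apply: (class_supp_eq0_of_values (m := 3)) cT _ => //.
    case=> [|[|[|j]]] // _; try exact: class_moment_lt2.
    by rewrite class_moment2 // l0 mulr0.
  by case: t t0 t3 => [|[|[|]]].
have mom34 j : (j == 3)%N || (j == 4)%N -> class_moment 0 j c = 0.
  move=> j34; have := s j.
  rewrite (class_moment_supp0 j (c12 1%N isT)) (class_moment_supp0 j (c12 2%N isT)) !addr0; apply.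
  by case/orP: j34 => /eqP ->.
apply: supp_classes_eq0 => -[_|t t3]; last exact: c12.
apply: (class_supp_eq0_of_values (m := 5)) cT _ => //.
by case=> [|[|[|[|[|j]]]]] // _;
  [exact: class_moment_lt2|exact: class_moment_lt2|exact: mom34|exact: mom34].
Qed.

Local Ltac twisted_ring :=
  rewrite /twisted_e1 /twisted_h2 /run_values !big_ord_recr !big_ord0 /= !big_cons !big_nil;
  ring: w2.

(* Either some class has at most two positions, or each has three and the certificate
   U * twisted_e1 + V * twisted_h2 = N, obtained by eliminating E (a resultant), shows
   that lambda is killed by the nonzero 5-smooth integer N. *)
Lemma two_windows_class_eq0 c a d q : c \in code -> (0 < a < 9)%N -> (d < 3)%N ->
  (forall i : 'I_n, c i != 0 ->
     (exists2 k, (k < a)%N & i = cyc k) \/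
     (exists2 k, (d <= k < d + (9 - a))%N & i = cyc (3 * q + k))) ->
  exists2 t, (t < 3)%N & class_supp c t = set0.
Proof.
move=> c_code /andP [a0 a9] d3 runs.
case: a a0 a9 runs => [|[|[|[|[|[|[|[|[|a]]]]]]]]] // _ _;
  case: d d3 => [|[|[|d]]] // _ /mem_run_values cT.
all: have small t (t3 : (t < 3)%N) := some_class_eq0_of_2_values c_code t3 cT.
all: have cert U V N := @some_class_eq0_of_certificate c _ U V N c_code cT.
all: set E := (3 * q)%:R in cert.
- exact: (small 2%N).
- by apply: (cert (30 + 6 * w + 6 * E) (- 1) 30) => //; twisted_ring.
- exact: (small 1%N).
- exact: (small 2%N).
- exact: (small 2%N).
- by apply: (cert (2 - 30 * w - 6 * w * E) w 6) => //; twisted_ring.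
- by apply: (cert (3 * w - 3) 0 27) => //; twisted_ring.
- by apply: (cert (3 + 3 * w) 0 9) => //; twisted_ring.
- by apply: (cert (- 3 - 3 * w) 0 9) => //; twisted_ring.
- exact: (small 2%N).
- by apply: (cert (20 + 4 * w + 4 * E) (- 1) 12) => //; twisted_ring.
- exact: (small 1%N).
- exact: (small 2%N).
- exact: (small 2%N).
- by apply: (cert (20 * w - 4 + 4 * w * E) (- w) 12) => //; twisted_ring.
- by apply: (cert (3 * w - 3) 0 27) => //; twisted_ring.
- by apply: (cert (3 * w) 0 9) => //; twisted_ring.
- by apply: (cert (- 3) 0 9) => //; twisted_ring.
- exact: (small 2%N).
- by apply: (cert (- 22 - 2 * w - 2 * E) 1 6) => //; twisted_ring.
- exact: (small 1%N).
- exact: (small 2%N).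
- exact: (small 2%N).
- by apply: (cert (22 * w - 6 + 2 * w * E) (- w) 30) => //; twisted_ring.
Qed.

Lemma class_moment_lt3 c t0 t j : c \in code -> (t0 < 3)%N -> class_supp c t0 = set0 ->
  (t < 3)%N -> (j < 3)%N -> class_moment t j c = 0.
Proof.
move=> c_code t03 ct0 t3; case: j => [|[|[|]]] // _; try exact: class_moment_lt2.
rewrite class_moment2 //; have := class_moment2 c_code t03; rewrite class_moment_supp0 //.
by move=> /esym/eqP; rewrite mulf_eq0 expf_eq0 (negbTE w_neq0) andbF => /eqP ->; rewrite mulr0.
Qed.

Lemma single_class_pair_weight c t0 t1 : c \in code -> c != 0 -> (t0 < 3)%N -> (t1 < 3)%N ->
  t1 != t0 -> class_supp c t0 = set0 -> class_supp c t1 = set0 -> (12 <= pair_weight c)%N.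
Proof.
move=> c_code c_neq0 t03 t13 t10 ct0 ct1; rewrite pair_weight_supp.
have [i Si] := supp_neq0 c_neq0; have i3 : (i %% 3 < 3)%N by rewrite ltn_pmod.
have i0 := class_supp_mod3 ct0 Si; have i1 := class_supp_mod3 ct1 Si.
have other (t : 'I_3) : t != Ordinal i3 -> class_supp c t = set0.
  rewrite -val_eqE /= => ti; case: (eqVneq (t : nat) t0) => [-> //|tt0].
  by case: (eqVneq (t : nat) t1) => [-> //|tt1]; have := ltn_ord t; lia.
have big : (5 < #|class_supp c (i %% 3)|)%N.
  apply: class_supp_card => [j j5|]; last first.
    by apply/set0Pn; exists i; rewrite inE eqxx; rewrite inE in Si.
  have [j3|j3] := ltnP j 3; first exact: class_moment_lt3 c_code t03 ct0 i3 j3.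
  have := sum_class_moments c_code j5; rewrite (bigD1 (Ordinal i3)) //= big1 ?addr0 //.
  by move=> t /other /class_moment_supp0 ->.
have isolated x : x \in supp c -> ord_pred x \notin supp c.
  move=> Sx; apply/negP => Spx; have := ord_pred_mod3 x.
  have := class_supp_mod3 ct0 Sx; have := class_supp_mod3 ct1 Sx.
  by have := class_supp_mod3 ct0 Spx; have := class_supp_mod3 ct1 Spx; lia.
have S6 := leq_trans big (subset_leq_card (class_supp_sub c (i %% 3)%N)).
have R6 := leq_trans S6 (card_le_run_starts isolated).
by rewrite -[12%N]/(6 + 6)%N leq_add.
Qed.

Lemma two_classes_pair_weight c t0 : c \in code -> (t0 < 3)%N -> class_supp c t0 = set0 ->
  (forall t, (t < 3)%N -> t != t0 -> class_supp c t != set0) -> (12 <= pair_weight c)%N.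
Proof.
move=> c_code t03 ct0 nonzero; rewrite pair_weight_supp.
have big t : (t < 3)%N -> t != t0 -> (3 < #|class_supp c t|)%N.
  move=> t3 tt0; apply: class_supp_card (nonzero t t3 tt0) => j.
  exact: class_moment_lt3 c_code t03 ct0 t3.
have no_triple x : x \in supp c -> ord_pred x \in supp c -> ord_pred (ord_pred x) \notin supp c.
  move=> Sx Spx; apply/negP => Sppx; have := ord_pred_mod3 x; have := ord_pred_mod3 (ord_pred x).
  have := class_supp_mod3 ct0 Sx; have := class_supp_mod3 ct0 Spx.
  by have := class_supp_mod3 ct0 Sppx; lia.
have S8 : (8 <= #|supp c|)%N.
  rewrite card_supp_classes; case: t0 t03 ct0 big {nonzero no_triple} => [|[|[|]]] // _ -> big.
  - by rewrite cards0; have := big 1%N isT isT; have := big 2%N isT isT; lia.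
  - by rewrite cards0; have := big 0%N isT isT; have := big 2%N isT isT; lia.
  - by rewrite cards0; have := big 0%N isT isT; have := big 1%N isT isT; lia.
have R4 := leq_trans S8 (card_le_double_run_starts no_triple).
by move: S8 R4; lia.
Qed.

Lemma one_run_eq0 c : c \in code -> run_starts (supp c) = [set cyc n.-1] ->
  (#|supp c| <= 10)%N -> c = 0.
Proof.
move=> c_code R1 S10; have := set11 (cyc n.-1); rewrite -R1 inE => /andP [x0S _].
apply: window10_eq0 => // i i10; apply/eqP; apply: contraTT i10 => ci.
have Si : i \in supp c by rewrite inE.
have [x] := mem_run_cover n_gt0 x0S Si; rewrite R1 inE => /eqP -> /mem_run_last [k k_lt ->].
have k10 : (k < 10)%N.
  by rewrite (leq_trans k_lt) // -(card_run n_gt0) (leq_trans _ S10) ?subset_leq_card ?run_sub.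
by rewrite -ltnNge /= modn_small // (leq_trans k10 n_ge10).
Qed.

Lemma two_runs_class_eq0 c y : c \in code -> run_starts (supp c) = [set cyc n.-1; y] ->
  cyc n.-1 != y -> (#|supp c| <= 9)%N -> exists2 t, (t < 3)%N & class_supp c t = set0.
Proof.
move=> c_code R2 x0y S9.
have x0R : cyc n.-1 \in run_starts (supp c) by rewrite R2 set21.
have yR : y \in run_starts (supp c) by rewrite R2 set22.
have x0S : cyc n.-1 \notin supp c by move: x0R; rewrite inE => /andP [].
have ab9 := leq_trans (run_len_add_le n_gt0 x0R yR x0y) S9.
have a0 := run_len_gt0 n_gt0 x0R; have b0 := run_len_gt0 n_gt0 yR.
apply: (two_windows_class_eq0 (a := run_len (supp c) (cyc n.-1)) (d := y.+1 %% 3) (q := y.+1 %/ 3))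
  c_code _ _ _.
- by rewrite a0; move: ab9 b0; lia.
- by rewrite ltn_pmod.
move=> i ci; have Si : i \in supp c by rewrite inE.
have [z] := mem_run_cover n_gt0 x0S Si; rewrite R2 => /set2P [->|->].
  by move/mem_run_last; left.
case/imsetP => k _ ->; right; exists (y.+1 %% 3 + k)%N; first by move: ab9 (ltn_ord k); lia.
by congr cyc; lia.
Qed.

Lemma all_classes_pair_weight c : c \in code ->
  (forall t, (t < 3)%N -> class_supp c t != set0) ->
  cyc n.-1 \in run_starts (supp c) -> (12 <= pair_weight c)%N.
Proof.
move=> c_code nonzero x0R.
have S9 : (9 <= #|supp c|)%N.
  have big t (t3 : (t < 3)%N) :=
    class_supp_card (fun j => class_moment_lt2 c_code t3) (nonzero t t3).
  by rewrite card_supp_classes; have := big 0%N isT; have := big 1%N isT; have := big 2%N isT; lia.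
rewrite pair_weight_supp; set R := run_starts (supp c) in x0R *.
have [R3|R_lt3] := leqP 3 #|R|; first by rewrite -[12%N]/(9 + 3)%N leq_add.
have R0 : (0 < #|R|)%N by apply/card_gt0P; exists (cyc n.-1).
have : #|R| = 1%N \/ #|R| = 2%N by lia.
case=> [/eqP /cards1P [x Rx]|/eqP /cards2P [x [y [xy Rxy]]]].
  have {x Rx} R1 : R = [set cyc n.-1] by move: x0R; rewrite Rx inE => /eqP ->.
  have [S10|S10] := leqP #|supp c| 10; last by rewrite R1 cards1 addn1.
  by have := nonzero 0%N isT; rewrite (one_run_eq0 c_code R1 S10) class_supp0 eqxx.
have [S10|S9'] := leqP 10 #|supp c|; first by rewrite Rxy cards2 xy -[12%N]/(10 + 2)%N leq_add.
have [y' x0y R2] : exists2 y', cyc n.-1 != y' & R = [set cyc n.-1; y'].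
  move: x0R; rewrite Rxy !inE => /orP [] /eqP x0E; subst; first by exists y.
  by exists x; rewrite 1?setUC // eq_sym.
have [t t3 ct] := two_runs_class_eq0 c_code R2 x0y S9'.
by have := nonzero t t3; rewrite ct eqxx.
Qed.

Lemma pair_weight_ge12_last_start c : c \in code -> cyc n.-1 \in run_starts (supp c) ->
  (12 <= pair_weight c)%N.
Proof.
move=> c_code x0R.
case: (boolP [exists t : 'I_3, class_supp c t == set0]) => [/existsP [t0 /eqP ct0]|]; last first.
  by move/existsPn => nz; apply: all_classes_pair_weight => // t t3; exact: (nz (Ordinal t3)).
have c_neq0 : c != 0 by apply: contraTneq x0R => ->; rewrite !inE !ffunE eqxx andbF.
case: (boolP [exists t : 'I_3, (t != t0) && (class_supp c t == set0)]).
  case/existsP => t1 /andP [t10 /eqP ct1].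
  exact: single_class_pair_weight c_code c_neq0 (ltn_ord t0) (ltn_ord t1) t10 ct0 ct1.
move/existsPn => nz; apply: two_classes_pair_weight c_code (ltn_ord t0) ct0 _ => t t3 tt0.
by have := nz (Ordinal t3); rewrite -val_eqE /= tt0.
Qed.

Lemma pair_weight_ge12 c : c \in code -> c != 0 -> (12 <= pair_weight c)%N.
Proof.
move=> c_code c_neq0; have [i Si] := supp_neq0 c_neq0.
have [full|] := eqVneq (supp c) setT.
  rewrite pair_weight_supp full cardsT card_ord.
  by apply: leq_trans (leq_addr _ _); move: p_gt5; lia.
rewrite -subTset => /subsetPn [q _ Sq].
have [x xR _] := mem_run_cover n_gt0 Sq Si.
rewrite -(pair_weight_rot x.+1).
exact: pair_weight_ge12_last_start (rot_code _ c_code) (rot_run_start xR).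
Qed.

Lemma syndromeB : {morph syndrome : x y / x - y}.
Proof.
move=> x y; apply/ffunP => l; rewrite !ffunE /moment /power_moment -sumrB.
by apply: eq_bigr => i _; rewrite !ffunE; ring.
Qed.

Lemma codeB x y : x \in code -> y \in code -> x - y \in code.
Proof. by rewrite !inE syndromeB => /eqP -> /eqP ->; rewrite subrr. Qed.

Lemma syndrome_prefix c :
  syndrome c = 0 -> (forall i : 'I_n, (10 <= i)%N -> c i = 0) -> c = 0.
Proof. by move=> c0; apply: window10_eq0; rewrite inE c0. Qed.

Lemma card_code : #|code| = (p ^ (n - 10))%N.
Proof. by rewrite (card_kernel n_ge10 syndromeB syndrome_prefix) card_Fp. Qed.

Lemma code_weight12 : exists c, [/\ c \in code, c != 0 & pair_weight c = 12%N].
Proof.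
pose v : {ffun 'I_(n - 10) -> F} := [ffun j : 'I_(n - 10) => ((j : nat) == 0%N)%:R].
have [c syn0 cv] := kernel_suffix_onto n_ge10 syndromeB syndrome_prefix v.
have c_code : c \in code by rewrite inE syn0.
have c_suffix (i : 'I_n) : (10 <= i)%N -> c i = ((i : nat) == 10%N)%:R.
  move=> i10; have i' : (i - 10 < n - 10)%N by have := ltn_ord i; lia.
  have := congr1 (fun s : {ffun 'I_(n - 10) -> F} => s (Ordinal i')) cv; rewrite !ffunE /=.
  rewrite subn_eq0 eqn_leq i10 andbT => <-; congr (c _); apply: val_inj; rewrite /= subnKC //.
have n11 : (11 <= n)%N by move: p_gt5; lia.
have far (j : 'I_n) : (10 < j)%N -> c j = 0.
  by move=> j10; rewrite c_suffix ?(ltnW j10) // gtn_eqF.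
have c_neq0 : c != 0.
  apply/eqP => c0; have := c_suffix (cyc 10); rewrite c0 ffunE /= modn_small //.
  by move=> /(_ (leqnn 10)) /esym/eqP; rewrite oner_eq0.
exists c; split=> //; apply/eqP; rewrite eqn_leq pair_weight_ge12 // andbT /pair_weight.
apply: leq_trans (_ : #|[set cyc (n.-1 + k) | k : 'I_12]| <= 12)%N; last first.
  by rewrite (leq_trans (leq_imset_card _ _)) ?card_ord.
apply/subset_leq_card/subsetP => i; rewrite inE => ci; apply/imsetP.
have [i10|i10] := leqP i 10.
  have ik : (i.+1 < 12)%N by rewrite ltnS.
  exists (Ordinal ik) => //; apply: val_inj.
  by rewrite /= -addSnnS prednK ?n_gt0 // addnC modnDr modn_small.
exists ord0 => //=; rewrite addn0; move: ci; rewrite far //= => /negP ordSi.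
apply: val_inj => /=; rewrite modn_small ?prednK ?ltn_predL ?n_gt0 //.
have [iS|] := ltnP i.+1 n; last by have := ltn_ord i; lia.
by case: ordSi; rewrite far //= modn_small // ltnW.
Qed.

End CubeRootCode.

Local Close Scope ring_scope.

Theorem theorem2 (p : nat) (hp : prime p) (hodd : odd p) (h3 : 3 %| p.-1) :
  exists C : {set word 'F_p (3 * p)},
    min_pair_dist C 12 /\ #|C| = p ^ (3 * p - 12 + 2).
Proof.
have p_gt5 : 5 < p by move: hp hodd h3; case: p => [|[|[|[|[|[|p]]]]]].
have [w w_root] : exists w : 'F_p, (w ^+ 2 + w + 1 = 0)%R.
  by apply: cube_root_of_unity; rewrite card_Fp.
exists (code w); split; [split|].
- have [c [c_code c_neq0 c12]] := code_weight12 hp p_gt5 w_root.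
  exists c, 0%R; split=> //; first by rewrite -(subrr c) codeB.
  by rewrite pair_dist_weight subr0.
- move=> x y xC yC xy; rewrite pair_dist_weight.
  by apply: (pair_weight_ge12 hp p_gt5 w_root (codeB xC yC)); rewrite subr_eq0.
- by rewrite card_code //; congr (_ ^ _); lia.
Qed.
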